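(* Let $\mathcal C$ be an additive category and $\mathbb E\colon\mathcal C^{\mathrm{op}}\times\mathcal C\to\mathsf{Ab}$ a biadditive functor. Then the exact category $(\widetilde{\mathbb E}\text{-}\mathrm{Ext}(\widetilde{\mathcal C}),\mathcal X_{\widetilde{\mathbb E}})$ is idempotent complete.
   Context: Write $a_*\alpha=\mathbb E(C,a)(\alpha)$, $c^*\beta=\mathbb E(c,A)(\beta)$. For an additive $\mathcal D$ and biadditive $\mathbb G$ on $\mathcal D$, the category of extensions $\mathbb G\text{-}\mathrm{Ext}(\mathcal D)$ has objects all $\alpha\in\mathbb G(C,A)$, morphisms $\alpha\to\beta\in\mathbb G(D,B)$ the pairs $(a\colon A\to B,c\colon C\to D)$ with $a_*\alpha=c^*\beta$, componentwise composition; $\mathcal X_{\mathbb G}$ is the class of sequences $\alpha\xrightarrow{(a,c)}\beta\xrightarrow{(b,d)}\gamma$ with $a,c$ sections in $\mathcal D$ and $b=\mathrm{coker}\,a$, $d=\mathrm{coker}\,c$; this is an exact structure. The idempotent completion $\widetilde{\mathcal C}$ has objects $(X,e)$ with $e\colon X\to X$ idempotent, morphisms $(e_Y,f,e_X)\colon(X,e_X)\to(Y,e_Y)$ with $fe_X=f=e_Yf$, composition $(e_Z,g,e_Y)(e_Y,f,e_X)=(e_Z,gf,e_X)$. The biadditive functor $\widetilde{\mathbb E}$ on $\widetilde{\mathcal C}$ is $\widetilde{\mathbb E}((C,e_C),(A,e_A))=\{(e_A,\alpha,e_C)\mid\alpha\in\mathbb E(C,A),(e_A)_*\alpha=\alpha=(e_C)^*\alpha\}$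 (group structure on the middle component), $\widetilde{\mathbb E}((e_C,d,e_D),(e_B,a,e_A))(e_A,\alpha,e_C)=(e_B,\mathbb E(d,a)(\alpha),e_D)$. Idempotent complete: every idempotent $e$ splits, i.e. $e=sr$ with $rs=1$. *)

From HB Require Import structures.
From mathcomp Require Import all_boot all_algebra.
From Stdlib Require Import ProofIrrelevance.
Set Implicit Arguments. Unset Strict Implicit. Unset Printing Implicit Defensive.
Import GRing.Theory.
Local Open Scope ring_scope.

Record Cat := {
  cob :> Type;
  chom : cob -> cob -> Type;
  cid : forall X, chom X X;
  ccomp : forall X Y Z, chom Y Z -> chom X Y -> chom X Z;
  ccomp_assoc : forall X Y Z W (h : chom Z W) (g : chom Y Z) (f : chom X Y),
    ccomp h (ccomp g f) = ccomp (ccomp h g) f;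
  ccomp_idl : forall X Y (f : chom X Y), ccomp (cid Y) f = f;
  ccomp_idr : forall X Y (f : chom X Y), ccomp f (cid X) = f }.
Arguments chom {K} X Y : rename.
Arguments cid {K} X : rename.
Arguments ccomp {K X Y Z} g f : rename.

Definition idem_complete (K : Cat) : Prop :=
  forall (X : K) (e : chom X X), ccomp e e = e ->
    exists (Y : K) (r : chom X Y) (s : chom Y X),
      ccomp r s = cid Y /\ ccomp s r = e.

Record AddCat := {
  aob :> Type;
  ahom : aob -> aob -> zmodType;
  aid : forall X, ahom X X;
  acomp : forall X Y Z, ahom Y Z -> ahom X Y -> ahom X Z;
  acomp_assoc : forall X Y Z W (h : ahom Z W) (g : ahom Y Z) (f : ahom X Y),
    acomp h (acomp g f) = acomp (acomp h g) f;
  acomp_idl : forall X Y (f : ahom X Y), acomp (aid Y) f = f;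
  acomp_idr : forall X Y (f : ahom X Y), acomp f (aid X) = f;
  acomp_addl : forall X Y Z (g g' : ahom Y Z) (f : ahom X Y),
    acomp (g + g') f = acomp g f + acomp g' f;
  acomp_addr : forall X Y Z (g : ahom Y Z) (f f' : ahom X Y),
    acomp g (f + f') = acomp g f + acomp g f';
  azero : aob;
  azero_init : forall X (f : ahom azero X), f = 0;
  azero_term : forall X (f : ahom X azero), f = 0;
  abiprod : aob -> aob -> aob;
  ainl : forall A B, ahom A (abiprod A B);
  ainr : forall A B, ahom B (abiprod A B);
  aprl : forall A B, ahom (abiprod A B) A;
  aprr : forall A B, ahom (abiprod A B) B;
  abi_ll : forall A B, acomp (aprl A B) (ainl A B) = aid A;
  abi_rr : forall A B, acomp (aprr A B) (ainr A B) = aid B;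
  abi_lr : forall A B, acomp (aprl A B) (ainr A B) = 0;
  abi_rl : forall A B, acomp (aprr A B) (ainl A B) = 0;
  abi_sum : forall A B,
    acomp (ainl A B) (aprl A B) + acomp (ainr A B) (aprr A B) = aid (abiprod A B) }.
Arguments ahom {C} X Y : rename.
Arguments aid {C} X : rename.
Arguments acomp {C X Y Z} g f : rename.

Record BiaddFun (C : AddCat) := {
  Eob : C -> C -> zmodType;
  Emap : forall (C0 D A B : C), ahom D C0 -> ahom A B -> Eob C0 A -> Eob D B;
  Emap_add : forall C0 D A B (c : ahom D C0) (a : ahom A B) (x y : Eob C0 A),
    Emap c a (x + y) = Emap c a x + Emap c a y;
  Emap_id : forall C0 A (x : Eob C0 A), Emap (aid C0) (aid A) x = x;
  Emap_comp : forall C0 D D' A B B' (c : ahom D C0) (c' : ahom D' D)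
      (a : ahom A B) (a' : ahom B B') (x : Eob C0 A),
    Emap (acomp c c') (acomp a' a) x = Emap c' a' (Emap c a x);
  Emap_addl : forall C0 D A B (c c' : ahom D C0) (a : ahom A B) (x : Eob C0 A),
    Emap (c + c') a x = Emap c a x + Emap c' a x;
  Emap_addr : forall C0 D A B (c : ahom D C0) (a a' : ahom A B) (x : Eob C0 A),
    Emap c (a + a') x = Emap c a x + Emap c a' x }.
Arguments Emap {C} E {C0 D A B} c a x : rename.
Arguments Eob {C} E X Y : rename.

(* Bifunctors D^op x D -> Set (used for the category of extensions;   *)
(* only the functorial structure of G is used by G-Ext(D)).           *)
Record BiFun (D : Cat) := {
  Gob : D -> D -> Type;
  Gmap : forall (C0 D0 A B : D), chom D0 C0 -> chom A B -> Gob C0 A -> Gob D0 B;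
  Gmap_id : forall C0 A (x : Gob C0 A), Gmap (cid C0) (cid A) x = x;
  Gmap_comp : forall C0 D0 D' A B B' (c : chom D0 C0) (c' : chom D' D0)
      (a : chom A B) (a' : chom B B') (x : Gob C0 A),
    Gmap (ccomp c c') (ccomp a' a) x = Gmap c' a' (Gmap c a x) }.
Arguments Gmap {D} G {C0 D0 A B} c a x : rename.
Arguments Gob {D} G X Y : rename.

Lemma sig_eq (T : Type) (P : T -> Prop) (u v : {x | P x}) :
  proj1_sig u = proj1_sig v -> u = v.
Proof.
case: u => x px; case: v => y py /= exy; subst y.
by rewrite (proof_irrelevance _ px py).
Qed.

Section Ext.
Variables (D : Cat) (G : BiFun D).

Definition ext_ob := {C0 : D & {A : D & Gob G C0 A}}.
Definition ext_C (x : ext_ob) : D := projT1 x.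
Definition ext_A (x : ext_ob) : D := projT1 (projT2 x).
Definition ext_val (x : ext_ob) : Gob G (ext_C x) (ext_A x) := projT2 (projT2 x).

Definition ext_hom (x y : ext_ob) :=
  {p : chom (ext_A x) (ext_A y) * chom (ext_C x) (ext_C y) |
     Gmap G (cid _) p.1 (ext_val x) = Gmap G p.2 (cid _) (ext_val y)}.

Lemma Gmap_swap C0 D0 A B (c : chom D0 C0) (a : chom A B) (u : Gob G C0 A) :
  Gmap G c (cid B) (Gmap G (cid C0) a u) = Gmap G (cid D0) a (Gmap G c (cid A) u).
Proof.
rewrite -!Gmap_comp.
by rewrite ccomp_idl ccomp_idr ccomp_idl ccomp_idr.
Qed.

Definition ext_id (x : ext_ob) : ext_hom x x.
Proof. by exists (cid _, cid _). Defined.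

Definition ext_comp (x y z : ext_ob) (g : ext_hom y z) (f : ext_hom x y) :
  ext_hom x z.
Proof.
exists (ccomp (proj1_sig g).1 (proj1_sig f).1, ccomp (proj1_sig g).2 (proj1_sig f).2).
case: g => [[a' c'] /= Hg]; case: f => [[a c] /= Hf] /=.
transitivity (Gmap G (ccomp (cid _) (cid _)) (ccomp a' a) (ext_val x)).
  by rewrite ccomp_idl.
rewrite Gmap_comp Hf -Gmap_swap Hg -Gmap_comp.
by rewrite ccomp_idl.
Defined.

Definition ExtCat : Cat.
Proof.
refine (@Build_Cat ext_ob ext_hom ext_id ext_comp _ _ _).
- move=> X Y Z W h g f; apply: sig_eq => /=; by rewrite !ccomp_assoc.
- move=> X Y f; apply: sig_eq => /=; rewrite !ccomp_idl; by case: (proj1_sig f).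
- move=> X Y f; apply: sig_eq => /=; rewrite !ccomp_idr; by case: (proj1_sig f).
Defined.
End Ext.

Section Kar.
Variable C : AddCat.

Definition kar_ob := {X : C & {e : ahom X X | acomp e e == e}}.
Definition kar_X (x : kar_ob) : C := projT1 x.
Definition kar_e (x : kar_ob) : ahom (kar_X x) (kar_X x) := proj1_sig (projT2 x).

Definition kar_hom (x y : kar_ob) :=
  {f : ahom (kar_X x) (kar_X y) | acomp f (kar_e x) = f /\ acomp (kar_e y) f = f}.

Lemma kar_e_idem (x : kar_ob) : acomp (kar_e x) (kar_e x) = kar_e x.
Proof. by apply/eqP; case: x => X [e he]. Qed.

Definition kar_id (x : kar_ob) : kar_hom x x.
Proof. exists (kar_e x); split; exact: kar_e_idem. Defined.

Definition kar_comp (x y z : kar_ob) (g : kar_hom y z) (f : kar_hom x y) :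
  kar_hom x z.
Proof.
exists (acomp (proj1_sig g) (proj1_sig f)).
case: g => g [g1 g2]; case: f => f [f1 f2] /=.
by rewrite -acomp_assoc f1 acomp_assoc g2.
Defined.

Definition KarCat : Cat.
Proof.
refine (@Build_Cat kar_ob kar_hom kar_id kar_comp _ _ _).
- move=> X Y Z W h g f; apply: sig_eq => /=; by rewrite acomp_assoc.
- move=> X Y [f [f1 f2]]; apply: sig_eq => /=; exact: f2.
- move=> X Y [f [f1 f2]]; apply: sig_eq => /=; exact: f1.
Defined.

Variable E : BiaddFun C.

Definition Et_ob (x y : kar_ob) :=
  {al : Eob E (kar_X x) (kar_X y) |
     Emap E (aid _) (kar_e y) al = al /\ Emap E (kar_e x) (aid _) al = al}.

Definition Et_map (C0 D0 A B : kar_ob) (d : kar_hom D0 C0) (a : kar_hom A B)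
  (u : Et_ob C0 A) : Et_ob D0 B.
Proof.
exists (Emap E (proj1_sig d) (proj1_sig a) (proj1_sig u)).
case: d => d [d1 d2]; case: a => a [a1 a2]; case: u => u [u1 u2] /=.
split.
- by rewrite -Emap_comp acomp_idr a2.
- by rewrite -Emap_comp acomp_idl d1.
Defined.

Definition Etilde : BiFun KarCat.
Proof.
refine (@Build_BiFun KarCat Et_ob Et_map _ _).
- move=> C0 A [u [u1 u2]]; apply: sig_eq => /=.
  rewrite -[kar_e C0](acomp_idr) -[kar_e A](acomp_idr (kar_e A)).
  by rewrite Emap_comp u2 u1.
- move=> C0 D0 D' A B B' c c' a a' u; apply: sig_eq => /=.
  by rewrite Emap_comp.
Defined.
End Kar.

(* An idempotent of [alpha] in [G]-Ext(D) is a pair of idempotents [(a, c)]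
   with [a_* alpha = c^* alpha].  If [a = s_A r_A] and [c = s_C r_C] split in
   D, then [beta := G(s_C, r_A) alpha] is a retract of [alpha] through
   [(r_A, r_C)] and [(s_A, s_C)], so G-Ext(D) is idempotent complete as soon
   as D is; no property of G beyond functoriality is needed.  The idempotent
   completion of C is idempotent complete: [f] on [(X, e)] splits through
   [(X, f)]. *)
From mathcomp Require Import ssreflect ssrfun ssrbool eqtype ssralg.
Set Implicit Arguments. Unset Strict Implicit. Unset Printing Implicit Defensive.

Section Retracts.
Variables (K : Cat) (X Y : K) (r : chom X Y) (s : chom Y X) (e : chom X X).
Hypotheses (rs1 : ccomp r s = cid Y) (sr_e : ccomp s r = e).

Lemma retraction_idemK : ccomp r e = r.
Proof. by rewrite -sr_e ccomp_assoc rs1 ccomp_idl. Qed.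

Lemma section_idemK : ccomp e s = s.
Proof. by rewrite -sr_e -ccomp_assoc rs1 ccomp_idr. Qed.

End Retracts.

Section ExtIdemComplete.
Variables (D : Cat) (G : BiFun D).

Lemma Gmap_contra_co C0 D0 A B (c : chom D0 C0) (a : chom A B) (u : Gob G C0 A) :
  Gmap G c a u = Gmap G (cid D0) a (Gmap G c (cid A) u).
Proof. by rewrite -Gmap_comp !ccomp_idr. Qed.

Lemma Gmap_co_contra C0 D0 A B (c : chom D0 C0) (a : chom A B) (u : Gob G C0 A) :
  Gmap G c a u = Gmap G c (cid B) (Gmap G (cid C0) a u).
Proof. by rewrite -Gmap_comp !ccomp_idl. Qed.

Lemma ext_idem_complete : idem_complete D -> idem_complete (ExtCat G).
Proof.
move=> splitD x [[a c] /= hom_ac] /(f_equal (@proj1_sig _ _)) [aa cc].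
have [A' [rA [sA [rsA srA]]]] := splitD _ a aa.
have [C' [rC [sC [rsC srC]]]] := splitD _ c cc.
pose beta := Gmap G sC rA (ext_val x).
have hom_r : Gmap G (cid _) rA (ext_val x) = Gmap G rC (cid A') beta.
  rewrite -Gmap_comp srC ccomp_idl [RHS]Gmap_contra_co -hom_ac -Gmap_comp.
  by rewrite ccomp_idl (retraction_idemK rsA srA).
have hom_s : Gmap G (cid C') sA beta = Gmap G sC (cid _) (ext_val x).
  rewrite -Gmap_comp srA ccomp_idr Gmap_co_contra hom_ac -Gmap_comp.
  by rewrite (section_idemK rsC srC) ccomp_idl.
exists (existT _ C' (existT _ A' beta)).
exists (exist _ (rA, rC) hom_r), (exist _ (sA, sC) hom_s).
by split; apply: sig_eq => /=; rewrite ?rsA ?rsC ?srA ?srC.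
Qed.

End ExtIdemComplete.

Lemma kar_idem_complete (C : AddCat) : idem_complete (KarCat C).
Proof.
move=> x [f [fe ef]] /(f_equal (@proj1_sig _ _)) /= ff.
have ff' : acomp f f == f by apply/eqP.
pose y : kar_ob C := existT _ (kar_X x) (exist _ f ff').
have r_hom : acomp f (kar_e x) = f /\ acomp (kar_e y) f = f by [].
have s_hom : acomp f (kar_e y) = f /\ acomp (kar_e x) f = f by [].
exists y, (exist _ f r_hom), (exist _ f s_hom).
by split; apply: sig_eq.
Qed.

Theorem corollary4p4 (C : AddCat) (E : BiaddFun C) :
  idem_complete (ExtCat (Etilde E)).
Proof. exact: ext_idem_complete (@kar_idem_complete C). Qed.
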